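(* Let $\mathcal T$ be a good triangulation of $\mathcal C_G$, let $S\in\mathcal T$ be a maximal simplex and let $w\in V$. Then there are unique real numbers $\lambda^w_u$ ($u\in V(S)$) and $\lambda^w_f$ ($f\in D(S)$) such that $$e_w=\sum_{u\in V(S)}\lambda^w_u e_u+\sum_{f\in D(S)}\lambda^w_f(e_{u_f}-e_{v_f}),$$ where $(u_f,v_f)$ is the fixed ordering of the endpoints of $f$.
   Context: For a finite undirected multigraph $G=(V,E)$ (loops, parallel edges and isolated nodes allowed) with $n=|V|$, $m=|E|$, work in $\mathbb{R}^V\times\mathbb{R}^E\cong\mathbb{R}^{n+m}$ with standard basis vectors $e_u$ ($u\in V$), $e_f$ ($f\in E$). Fix for each edge $f$ an ordering $(u,v)$ of its endpoints ($u=v$ for a loop) and set $\widetilde e_f=e_u+e_v-e_f$, $\overleftarrow e_f=e_u-e_v+e_f$, $\overrightarrow e_f=-e_u+e_v+e_f$ (so for a loop $\overleftarrow e_f=\overrightarrow e_f=e_f$). The cosmological polytope $\mathcal C_G$ is the convex hull of $\{e_f,\widetilde e_f,\overleftarrow e_f,\overrightarrow e_f: f\in E\}\cup\{e_u: u\in V\}$; these are exactly its lattice points, and it is an $(n+m-1)$-dimensional polytope in the hyperplane $\sum_i x_i=1$. A good triangulation of $\mathcal C_G$ is a regular triangulation (induced by a height function on the lattice points of $\mathcal C_G$) whose vertex set is the set of all lattice points of $\mathcal C_G$ and which contains the standard simplex $\mathrm{conv}\{e_u,e_f: u\in V, f\in E\}$ as a maximal cell; simplices are identified with their vertex sets. For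 a simplex $S\in\mathcal T$: the selected nodes are $V(S)=\{u\in V: e_u\in S\}$; the squiggly edges $\widetilde E(S)=\{f:\widetilde e_f\in S\}$; the selected edges $\widehat E(S)=\{f: e_f\in S\}$; for non-loop edges $f$, $f\in\overleftarrow E(S)$ iff $\overleftarrow e_f\in S$ and $f\in\overrightarrow E(S)$ iff $\overrightarrow e_f\in S$ (loops are never in $\overleftarrow E(S)\cup\overrightarrow E(S)$); the double edges are $D(S)=(\overleftarrow E(S)\cup\overrightarrow E(S))\cap\widehat E(S)$. *)

From HB Require Import structures.
From mathcomp Require Import all_boot all_order all_algebra.
From mathcomp Require Import reals.
Set Implicit Arguments.
Unset Strict Implicit.
Unset Printing Implicit Defensive.
Import Order.TTheory GRing.Theory Num.Theory.
Local Open Scope ring_scope.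

(* A finite multigraph: node type V, edge type E, and for every edge f a fixed
   ordering (src f, tgt f) of its endpoints; f is a loop iff src f = tgt f. *)

Section Cosmo.
Variables (R : realType) (V E : finType) (src tgt : E -> V).

Definition vec := {ffun (V + E)%type -> R^o}.

Definition eV (u : V) : vec := [ffun i => ((i == inl u) : nat)%:R].
Definition eE (f : E) : vec := [ffun i => ((i == inr f) : nat)%:R].

Definition e_tilde (f : E) : vec := eV (src f) + eV (tgt f) - eE f.
Definition e_left  (f : E) : vec := eV (src f) - eV (tgt f) + eE f.
Definition e_right (f : E) : vec := - eV (src f) + eV (tgt f) + eE f.

(* Labels of lattice points: inl u ~ e_u ; inr (f,k) ~
   k = 0 : e_f,  k = 1 : tilde e_f,  k = 2 : left e_f,  k = 3 : right e_f. *)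
Definition lbl := (V + (E * 'I_4))%type.

Definition kE : 'I_4 := inord 0.
Definition kT : 'I_4 := inord 1.
Definition kL : 'I_4 := inord 2.
Definition kR : 'I_4 := inord 3.

Definition pt (l : lbl) : vec :=
  match l with
  | inl u => eV u
  | inr (f, k) =>
      match val k with
      | 0 => eE f
      | 1 => e_tilde f
      | 2 => e_left f
      | _ => e_right f
      end
  end.

(* For a loop, left/right e_f coincide with e_f, so these labels are not used:
   the valid labels are in bijection with the lattice points of C_G. *)
Definition valid (l : lbl) : bool :=
  match l with
  | inl _ => true
  | inr (f, k) => (val k < 2)%N || (src f != tgt f)
  end.

Definition dotv (c x : vec) : R := \sum_i c i * x i.

(* Cells of the regular subdivision induced by the height function h:
   sets of lattice points on which some lower supporting (affine) functional of
   the lifted configuration is attained.  Since all points lie in the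
   hyperplane sum x_i = 1, affine functionals are linear functionals here. *)
Definition cell (h : lbl -> R) (F : {set lbl}) : Prop :=
  exists c : vec,
    (forall l, valid l -> dotv c (pt l) <= h l) /\
    F = [set l | valid l && (dotv c (pt l) == h l)].

Definition max_cell (h : lbl -> R) (F : {set lbl}) : Prop :=
  cell h F /\ forall F', cell h F' -> F \subset F' -> F' = F.

Definition aff_indep (F : {set lbl}) : Prop :=
  forall a : lbl -> R,
    \sum_(l in F) a l = 0 ->
    \sum_(l in F) a l *: pt l = 0 ->
    forall l, l \in F -> a l = 0.

Definition std_simplex : {set lbl} :=
  [set l | match l with inl _ => true | inr (_, k) => k == kE end].

(* h induces a good triangulation: every cell is a simplex, every lattice
   point is a vertex, and the standard simplex is a maximal cell. *)
Definition good (h : lbl -> R) : Prop :=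
  [/\ forall F, cell h F -> aff_indep F,
      forall l, valid l -> cell h [set l]
    & max_cell h std_simplex].

Definition Vsel (S : {set lbl}) : {set V} := [set u | inl u \in S].
Definition Dsel (S : {set lbl}) : {set E} :=
  [set f | (src f != tgt f) &&
           ((inr (f, kL) \in S) || (inr (f, kR) \in S)) &&
           (inr (f, kE) \in S)].

Definition decomp (S : {set lbl}) (w : V) (a : V -> R) (b : E -> R) : Prop :=
  eV w = \sum_(u in Vsel S) a u *: eV u
         + \sum_(f in Dsel S) b f *: (eV (src f) - eV (tgt f)).

End Cosmo.

From HB Require Import structures.
From mathcomp Require Import all_boot all_order all_algebra.
From mathcomp Require Import reals.
From mathcomp Require Import ring lra.
Set Implicit Arguments.
Unset Strict Implicit.
Unset Printing Implicit Defensive.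
Import Order.TTheory GRing.Theory Num.Theory.
Local Open Scope ring_scope.

(* Uniqueness: e_u (u in V(S)) and e_{u_f} - e_{v_f} = +-(left/right e_f - e_f)
   (f in D(S)) are combinations of vertices of S with total weight 0, so affine
   independence of S makes them linearly independent.
   Existence: otherwise some functional vanishes on these vectors but not on
   e_w; on V it is a "potential" y, zero on V(S) and equal at both ends of every
   double edge.  Comparing the supporting functional of S with that of the
   standard simplex shows that S contains at most one of tilde e_f, left e_f,
   right e_f, and not both tilde e_f and e_f; hence y extends to a functional
   vanishing on S.  A maximal cell spans the whole space, so this functional
   vanishes at e_w, i.e. y w = 0. *)

Lemma notin_vspace_separation (K : fieldType) (I : finType)
    (U : {vspace {ffun I -> K^o}}) (x : {ffun I -> K^o}) :
  x \notin U -> exists psi : {ffun I -> K^o} -> K,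
    [/\ {morph psi : z z' / z - z'}, {in U, forall u, psi u = 0} & psi x != 0].
Proof.
move=> xNU; have x_projC : x - projv U x != 0.
  by apply: contra xNU; rewrite subr_eq0 => /eqP ->; exact: memv_proj.
have [i xi] : exists i, (x - projv U x) i != 0.
  apply/existsP; apply: contraR x_projC => /existsPn x0.
  by apply/eqP/ffunP => j; rewrite [RHS]ffunE; apply/eqP; move: (x0 j); rewrite negbK.
exists (fun z => (z - projv U z) i); split => //.
- by move=> z z'; rewrite linearB !ffunE /=; ring.
- by move=> u Hu; rewrite /= projv_id // subrr ffunE.
Qed.

Section Cosmological.
Variables (R : realType) (V E : finType) (src tgt : E -> V).
Local Notation vec := (vec R V E).
Local Notation eV := (@eV R V E).
Local Notation eE := (@eE R V E).
Local Notation pt := (@pt R V E src tgt).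
Local Notation valid := (valid src tgt).
Local Notation Dsel := (Dsel src tgt).
Local Notation aff_indep := (@aff_indep R V E src tgt).

Lemma dotvD (c x y : vec) : dotv c (x + y) = dotv c x + dotv c y.
Proof. by rewrite /dotv -big_split; apply: eq_bigr => i _; rewrite ffunE mulrDr. Qed.

Lemma dotvN (c x : vec) : dotv c (- x) = - dotv c x.
Proof. by rewrite /dotv -sumrN; apply: eq_bigr => i _; rewrite ffunE mulrN. Qed.

Lemma dotvZ (c x : vec) k : dotv c (k *: x) = k * dotv c x.
Proof. by rewrite /dotv mulr_sumr; apply: eq_bigr => i _; rewrite ffunE mulrCA. Qed.

Lemma dotv0 (c : vec) : dotv c 0 = 0.
Proof. by rewrite /dotv big1 // => i _; rewrite ffunE mulr0. Qed.

Lemma dotv_sum (c : vec) (P : pred (lbl V E)) (k : lbl V E -> R) (x : lbl V E -> vec) :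
  dotv c (\sum_(l | P l) k l *: x l) = \sum_(l | P l) k l * dotv c (x l).
Proof.
rewrite (big_morph (dotv c) (dotvD c) (dotv0 c)).
by apply: eq_bigr => l _; rewrite dotvZ.
Qed.

Lemma dotvDl (c d x : vec) t : dotv (c + t *: d) x = dotv c x + t * dotv d x.
Proof.
rewrite /dotv mulr_sumr -big_split.
by apply: eq_bigr => i _; rewrite !ffunE mulrDl mulrA.
Qed.

Lemma dotvNl (d x : vec) : dotv (- d) x = - dotv d x.
Proof. by rewrite /dotv -sumrN; apply: eq_bigr => i _; rewrite ffunE mulNr. Qed.

Lemma dotv_eV (c : vec) u : dotv c (eV u) = c (inl u).
Proof.
rewrite /dotv (bigD1 (inl u)) //= big1 ?addr0 => [|i /negbTE Hi];
  by rewrite ffunE ?eqxx ?Hi ?mulr1 ?mulr0.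
Qed.

Lemma dotv_eE (c : vec) f : dotv c (eE f) = c (inr f).
Proof.
rewrite /dotv (bigD1 (inr f)) //= big1 ?addr0 => [|i /negbTE Hi];
  by rewrite ffunE ?eqxx ?Hi ?mulr1 ?mulr0.
Qed.

Lemma valkE : val kE = 0%N. Proof. by rewrite /= inordK. Qed.
Lemma valkT : val kT = 1%N. Proof. by rewrite /= inordK. Qed.
Lemma valkL : val kL = 2%N. Proof. by rewrite /= inordK. Qed.
Lemma valkR : val kR = 3%N. Proof. by rewrite /= inordK. Qed.

Lemma kT_neq_kE : kT != kE. Proof. by rewrite -(inj_eq val_inj) valkT valkE. Qed.
Lemma kL_neq_kE : kL != kE. Proof. by rewrite -(inj_eq val_inj) valkL valkE. Qed.
Lemma kR_neq_kE : kR != kE. Proof. by rewrite -(inj_eq val_inj) valkR valkE. Qed.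

Lemma ord4P (k : 'I_4) : [\/ k = kE, k = kT, k = kL | k = kR].
Proof.
case: k => [[|[|[|[|//]]]] Hk]; [constructor 1|constructor 2|constructor 3|constructor 4];
  by apply: val_inj; rewrite /= inordK.
Qed.

Lemma dotv_ptE (c : vec) f : dotv c (pt (inr (f, kE))) = c (inr f).
Proof. by rewrite /= valkE dotv_eE. Qed.

Lemma dotv_ptT (c : vec) f :
  dotv c (pt (inr (f, kT))) = c (inl (src f)) + c (inl (tgt f)) - c (inr f).
Proof. by rewrite /= valkT /e_tilde !(dotvD, dotvN, dotv_eV, dotv_eE). Qed.

Lemma dotv_ptL (c : vec) f :
  dotv c (pt (inr (f, kL))) = c (inl (src f)) - c (inl (tgt f)) + c (inr f).
Proof. by rewrite /= valkL /e_left !(dotvD, dotvN, dotv_eV, dotv_eE). Qed.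

Lemma dotv_ptR (c : vec) f :
  dotv c (pt (inr (f, kR))) = - c (inl (src f)) + c (inl (tgt f)) + c (inr f).
Proof. by rewrite /= valkR /e_right !(dotvD, dotvN, dotv_eV, dotv_eE). Qed.

Definition ones : vec := [ffun => 1].

Lemma dotv_ones_pt l : dotv ones (pt l) = 1.
Proof.
case: l => [u|[f [[|[|[|k]]] Hk]]] /=; rewrite ?/e_tilde ?/e_left ?/e_right
  !(dotvD, dotvN, dotv_eV, dotv_eE) ?ffunE //; lra.
Qed.

(* If d vanished on S but were positive at some lattice point, moving the
   supporting functional c of S in direction d until it meets the first such
   point would give a strictly larger cell. *)
Lemma max_cell_annihilator_le0 (h : lbl V E -> R) (S : {set lbl V E}) (d : vec) :
  max_cell src tgt h S -> (forall l, l \in S -> dotv d (pt l) = 0) ->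
  forall l0, valid l0 -> dotv d (pt l0) <= 0.
Proof.
move=> [[c [Hc HS]] Hmax] Hd l0 Hl0; rewrite leNgt; apply/negP => Hpos.
pose P := [pred l | valid l && (0 < dotv d (pt l))].
pose F l := (h l - dotv c (pt l)) / dotv d (pt l).
have P0 : P l0 by rewrite /= Hl0.
case: (arg_minP F P0) => ls /andP[Hvs Hps] Hmin.
set t := F ls.
have t_ge0 : 0 <= t by rewrite /t /F divr_ge0 // ?subr_ge0 ?Hc // ltW.
pose c' := c + t *: d.
have Hc' l : valid l -> dotv c' (pt l) <= h l.
  move=> Hl; rewrite dotvDl; case: (ltP 0 (dotv d (pt l))) => Hdl.
    have := Hmin l; rewrite /= Hl Hdl => /(_ isT).
    by rewrite /F ler_pdivlMr // -lerBrDl.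
  apply: le_trans (Hc l Hl); rewrite -[leRHS]addr0 lerD2l.
  exact: mulr_ge0_le0.
have sub : S \subset [set l | valid l && (dotv c' (pt l) == h l)].
  apply/subsetP => l Hl; have := Hl; rewrite {1}HS !inE => /andP[Hv /eqP Heq].
  by rewrite Hv dotvDl Hd // mulr0 addr0 Heq eqxx.
have HF := Hmax _ (ex_intro _ c' (conj Hc' erefl)) sub.
have : ls \in S.
  have d_neq0 : dotv d (pt ls) != 0 by rewrite gt_eqF.
  by rewrite -HF inE Hvs dotvDl /t /F divfK // addrC subrK eqxx.
by move/Hd => H0; rewrite H0 ltxx in Hps.
Qed.

Lemma max_cell_annihilator (h : lbl V E -> R) (S : {set lbl V E}) (d : vec) :
  max_cell src tgt h S -> (forall l, l \in S -> dotv d (pt l) = 0) ->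
  forall l, valid l -> dotv d (pt l) = 0.
Proof.
move=> Smax Hd l Hl; apply/eqP; rewrite eq_le (max_cell_annihilator_le0 Smax) //=.
rewrite -oppr_le0 -dotvNl (max_cell_annihilator_le0 Smax) // => l' Hl'.
by rewrite dotvNl Hd ?oppr0.
Qed.

Section CellVersusStdSimplex.
Variables (h : lbl V E -> R) (c0 c : vec) (S : {set lbl V E}).
Hypothesis Hc0 : forall l, valid l -> dotv c0 (pt l) <= h l.
Hypothesis Hstd : std_simplex V E = [set l | valid l && (dotv c0 (pt l) == h l)].
Hypothesis Hc : forall l, valid l -> dotv c (pt l) <= h l.
Hypothesis HS : S = [set l | valid l && (dotv c (pt l) == h l)].

Lemma in_cellP l : l \in S -> valid l /\ dotv c (pt l) = h l.
Proof. by rewrite HS inE => /andP[-> /eqP]. Qed.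

Lemma std_supp_eV u : c0 (inl u) = h (inl u).
Proof.
have : inl u \in std_simplex V E by rewrite inE.
by rewrite Hstd inE -dotv_eV => /andP[_ /eqP].
Qed.

Lemma std_supp_eE f : c0 (inr f) = h (inr (f, kE)).
Proof.
have : inr (f, kE) \in std_simplex V E by rewrite inE.
by rewrite Hstd inE dotv_ptE => /andP[_ /eqP].
Qed.

Lemma std_supp_lt f k : k != kE -> valid (inr (f, k)) ->
  dotv c0 (pt (inr (f, k))) < h (inr (f, k)).
Proof.
move=> Hk Hv; rewrite lt_neqAle Hc0 // andbT; apply/negP => /eqP Heq.
have : inr (f, k) \in std_simplex V E by rewrite Hstd inE Hv Heq eqxx.
by rewrite inE (negbTE Hk).
Qed.

Lemma supp_le_std_eV u : c (inl u) <= c0 (inl u).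
Proof. by rewrite std_supp_eV -dotv_eV (Hc (l := inl u)). Qed.

Lemma supp_le_std_eE f : c (inr f) <= c0 (inr f).
Proof. by rewrite std_supp_eE -dotv_ptE Hc //= valkE. Qed.

Lemma cell_excl_left_right f : inr (f, kL) \in S -> inr (f, kR) \in S -> False.
Proof.
move=> /in_cellP[vL eL] /in_cellP[vR eR].
have := std_supp_lt kL_neq_kE vL; have := std_supp_lt kR_neq_kE vR.
have := supp_le_std_eE f; have := std_supp_eE f.
move: eL eR; rewrite !(dotv_ptL, dotv_ptR); lra.
Qed.

Lemma cell_excl_tilde_left f : inr (f, kT) \in S -> inr (f, kL) \in S -> False.
Proof.
move=> /in_cellP[vT eT] /in_cellP[vL eL].
have := std_supp_lt kT_neq_kE vT; have := std_supp_lt kL_neq_kE vL.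
have := supp_le_std_eV (src f); have := std_supp_eV (src f).
move: eT eL; rewrite !(dotv_ptT, dotv_ptL); lra.
Qed.

Lemma cell_excl_tilde_right f : inr (f, kT) \in S -> inr (f, kR) \in S -> False.
Proof.
move=> /in_cellP[vT eT] /in_cellP[vR eR].
have := std_supp_lt kT_neq_kE vT; have := std_supp_lt kR_neq_kE vR.
have := supp_le_std_eV (tgt f); have := std_supp_eV (tgt f).
move: eT eR; rewrite !(dotv_ptT, dotv_ptR); lra.
Qed.

Lemma cell_excl_tilde_edge f : inr (f, kT) \in S -> inr (f, kE) \in S -> False.
Proof.
move=> /in_cellP[vT eT] /in_cellP[_ eE'].
have := std_supp_lt kT_neq_kE vT; have := std_supp_eE f.
have := supp_le_std_eV (src f); have := std_supp_eV (src f).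
have := supp_le_std_eV (tgt f); have := std_supp_eV (tgt f).
move: eT eE'; rewrite !(dotv_ptT, dotv_ptE); lra.
Qed.

Lemma annihilator_of_potential (y : V -> R) :
  (forall u, u \in Vsel S -> y u = 0) ->
  (forall f, f \in Dsel S -> y (src f) = y (tgt f)) ->
  exists d : vec, (forall u, d (inl u) = y u) /\
                  (forall l, l \in S -> dotv d (pt l) = 0).
Proof.
move=> y_V y_D.
pose dE f :=
  if inr (f, kE) \in S then 0
  else if inr (f, kT) \in S then y (src f) + y (tgt f)
  else if inr (f, kL) \in S then y (tgt f) - y (src f)
  else if inr (f, kR) \in S then y (src f) - y (tgt f) else 0.
pose d : vec := [ffun j => match j with inl u => y u | inr f => dE f end].
have dV u : d (inl u) = y u by rewrite ffunE.
have dEq f : d (inr f) = dE f by rewrite ffunE.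
exists d; split=> // -[u|[f k]] Hl.
  by rewrite /= dotv_eV dV y_V // inE.
have [Hv _] := in_cellP Hl.
case: (ord4P k) => Hk; subst k.
- by rewrite dotv_ptE dEq /dE Hl.
- have nE : inr (f, kE) \notin S by apply/negP; exact: cell_excl_tilde_edge Hl.
  by rewrite dotv_ptT !dV dEq /dE (negbTE nE) Hl subrr.
- rewrite /= valkL /= in Hv; case: (boolP (inr (f, kE) \in S)) => HE.
    have HD : f \in Dsel S by rewrite inE Hl HE Hv.
    by rewrite dotv_ptL !dV dEq /dE HE (y_D f HD) subrr add0r.
  have nT : inr (f, kT) \notin S by apply/negP => HT; exact: cell_excl_tilde_left HT Hl.
  by rewrite dotv_ptL !dV dEq /dE (negbTE HE) (negbTE nT) Hl; lra.
- rewrite /= valkR /= in Hv; case: (boolP (inr (f, kE) \in S)) => HE.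
    have HD : f \in Dsel S by rewrite inE Hl HE Hv orbT.
    by rewrite dotv_ptR !dV dEq /dE HE (y_D f HD) addNr add0r.
  have nT : inr (f, kT) \notin S by apply/negP => HT; exact: cell_excl_tilde_right HT Hl.
  have nL : inr (f, kL) \notin S by apply/negP => HL; exact: cell_excl_left_right HL Hl.
  by rewrite dotv_ptR !dV dEq /dE (negbTE HE) (negbTE nT) (negbTE nL) Hl; lra.
Qed.

End CellVersusStdSimplex.

Lemma potential_vanishes (h : lbl V E -> R) (S : {set lbl V E}) (y : V -> R) :
  good src tgt h -> max_cell src tgt h S ->
  (forall u, u \in Vsel S -> y u = 0) ->
  (forall f, f \in Dsel S -> y (src f) = y (tgt f)) ->
  forall w, y w = 0.
Proof.
move=> [_ _ [[c0 [Hc0 Hstd]] _]] Smax y_V y_D w.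
have [[c [Hc HS]] _] := Smax.
have [d [dV Hd]] := annihilator_of_potential Hc0 Hstd Hc HS y_V y_D.
by rewrite -dV -dotv_eV (max_cell_annihilator Smax Hd (l := inl w)).
Qed.

Definition dspan (S : {set lbl V E}) : {vspace vec} :=
  (\sum_(u in Vsel S) <[eV u]> + \sum_(f in Dsel S) <[eV (src f) - eV (tgt f)]>)%VS.

Lemma memv_dspanV S u : u \in Vsel S -> eV u \in dspan S.
Proof.
move=> Hu; rewrite -[eV u]addr0; apply: memv_add; last exact: mem0v.
exact: (subvP (sumv_sup u Hu (subvv _))) _ (memv_line _).
Qed.

Lemma memv_dspanD S f : f \in Dsel S -> eV (src f) - eV (tgt f) \in dspan S.
Proof.
move=> Hf; rewrite -[_ - _]add0r; apply: memv_add; first exact: mem0v.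
exact: (subvP (sumv_sup f Hf (subvv _))) _ (memv_line _).
Qed.

Lemma decomp_of_memv S w : eV w \in dspan S ->
  exists (a : V -> R) (b : E -> R), decomp src tgt S w a b.
Proof.
move/memv_addP=> [x /memv_sumP[vx Hvx ->] [y /memv_sumP[vy Hvy ->] Hw]].
exists (fun u => vx u (inl u)), (fun f => vy f (inl (src f))).
rewrite /decomp Hw; congr (_ + _); apply: eq_bigr => i Hi.
  have [k ->] := vlineP _ _ (Hvx i Hi).
  by rewrite !ffunE eqxx /=; congr (_ *: _); rewrite -[RHS]/(k * 1) mulr1.
have [k ->] := vlineP _ _ (Hvy i Hi).
have st : src i != tgt i by move: Hi; rewrite inE => /andP[/andP[]].
rewrite !ffunE !eqxx /= (inj_eq (@inl_inj _ _)) (negbTE st) /=.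
by congr (_ *: _); rewrite -[RHS]/(k * (1 - 0)) subr0 mulr1.
Qed.

Lemma decomp_exists (h : lbl V E -> R) (S : {set lbl V E}) (w : V) :
  good src tgt h -> max_cell src tgt h S ->
  exists (a : V -> R) (b : E -> R), decomp src tgt S w a b.
Proof.
move=> hgood Smax; case: (boolP (eV w \in dspan S)) => [/decomp_of_memv //|].
move=> /notin_vspace_separation[psi [psiB psi0 psi_w]].
have y_V u : u \in Vsel S -> psi (eV u) = 0 by move=> Hu; exact/psi0/memv_dspanV.
have y_D f : f \in Dsel S -> psi (eV (src f)) = psi (eV (tgt f)).
  by move=> Hf; apply/eqP; rewrite -subr_eq0 -psiB psi0 //; exact: memv_dspanD.
by rewrite (potential_vanishes hgood Smax y_V y_D) eqxx in psi_w.
Qed.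

Section DoubleEdgeLift.
Variable S : {set lbl V E}.

Definition dir_label f : 'I_4 := if inr (f, kL) \in S then kL else kR.
Definition dir_sign f : R := if inr (f, kL) \in S then 1 else -1.

Definition lift_coef (a : V -> R) (b : E -> R) (l : lbl V E) : R :=
  match l with
  | inl u => if u \in Vsel S then a u else 0
  | inr (f, k) =>
      if f \in Dsel S then
        if k == dir_label f then dir_sign f * b f
        else if k == kE then - (dir_sign f * b f) else 0
      else 0
  end.

Lemma dir_label_neq_kE f : dir_label f != kE.
Proof. by rewrite /dir_label; case: ifP => _; rewrite ?kL_neq_kE ?kR_neq_kE. Qed.

Lemma DselP f : f \in Dsel S ->
  [/\ inr (f, dir_label f) \in S, inr (f, kE) \in S & src f != tgt f].
Proof.
rewrite inE => /andP[/andP[st HLR] HE]; split => //.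
by rewrite /dir_label; case: ifP => // HL; move: HLR; rewrite HL.
Qed.

Lemma dir_sign_pt f :
  dir_sign f *: (pt (inr (f, dir_label f)) - pt (inr (f, kE))) = eV (src f) - eV (tgt f).
Proof.
rewrite /dir_sign /dir_label; case: ifP => _ /=;
  rewrite ?valkL ?valkR valkE /e_left /e_right ?scale1r ?scaleN1r;
  by apply/ffunP => i; rewrite !ffunE; lra.
Qed.

Lemma lift_coef_out a b l : l \notin S -> lift_coef a b l = 0.
Proof.
case: l => [u|[f k]] /= Hl; first by rewrite inE (negbTE Hl).
case: ifP => // HD; have [H1 H2 _] := DselP HD.
case: ifP => [/eqP Hk|_]; first by move: H1; rewrite -Hk (negbTE Hl).
by case: ifP => // /eqP Hk; move: H2; rewrite -Hk (negbTE Hl).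
Qed.

Lemma lift_coef_dir a b f : f \in Dsel S ->
  lift_coef a b (inr (f, dir_label f)) = dir_sign f * b f.
Proof. by move=> HD /=; rewrite HD eqxx. Qed.

Lemma lift_coef_kE a b f : f \in Dsel S ->
  lift_coef a b (inr (f, kE)) = - (dir_sign f * b f).
Proof. by move=> HD /=; rewrite HD eq_sym (negbTE (dir_label_neq_kE f)) eqxx. Qed.

Lemma lift_coef_sum a b :
  \sum_(l in S) lift_coef a b l *: pt l =
  \sum_(u in Vsel S) a u *: eV u + \sum_(f in Dsel S) b f *: (eV (src f) - eV (tgt f)).
Proof.
rewrite big_mkcond /= (eq_bigr (fun l => lift_coef a b l *: pt l)); last first.
  by move=> l _; case: ifP => // /negbT /(lift_coef_out a b) ->; rewrite scale0r.
rewrite big_sumType /=; congr (_ + _).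
  by rewrite [RHS]big_mkcond; apply: eq_bigr => u _ /=; case: ifP; rewrite ?scale0r.
rewrite (eq_bigr (fun p => lift_coef a b (inr (p.1, p.2)) *: pt (inr (p.1, p.2)))); last by case.
rewrite -(pair_bigA _ (fun f k => lift_coef a b (inr (f, k)) *: pt (inr (f, k)))).
rewrite [RHS]big_mkcond; apply: eq_bigr => f _.
case: ifP => HD; last by rewrite big1 // => k _ /=; rewrite HD scale0r.
rewrite (bigD1 (dir_label f)) // (bigD1 kE); last by rewrite eq_sym dir_label_neq_kE.
rewrite big1 ?addr0; last first.
  by move=> k /andP[/negbTE H1 /negbTE H2] /=; rewrite HD H1 H2 scale0r.
rewrite (lift_coef_dir _ _ HD) (lift_coef_kE _ _ HD) scaleNr -dir_sign_pt.
by rewrite /= addr0 scalerA scalerBr mulrC.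
Qed.

Lemma dspan_free (a : V -> R) (b : E -> R) : aff_indep S ->
  \sum_(u in Vsel S) a u *: eV u + \sum_(f in Dsel S) b f *: (eV (src f) - eV (tgt f)) = 0 ->
  (forall u, u \in Vsel S -> a u = 0) /\ (forall f, f \in Dsel S -> b f = 0).
Proof.
move=> Sindep comb0.
have vec0 : \sum_(l in S) lift_coef a b l *: pt l = 0 by rewrite lift_coef_sum.
have sum0 : \sum_(l in S) lift_coef a b l = 0.
  rewrite -[RHS](dotv0 ones) -vec0 dotv_sum.
  by apply: eq_bigr => l _; rewrite dotv_ones_pt mulr1.
have coef0 := Sindep _ sum0 vec0; split => [u Hu|f Hf].
  by have := coef0 (inl u); rewrite /= Hu; apply; rewrite inE in Hu.
have [H1 _ _] := DselP Hf; move: (coef0 _ H1); rewrite lift_coef_dir // => /eqP.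
by rewrite mulf_eq0 /dir_sign; case: ifP; rewrite ?oppr_eq0 oner_eq0 => _ /eqP.
Qed.

Lemma decomp_unique w (a a' : V -> R) (b b' : E -> R) : aff_indep S ->
  decomp src tgt S w a b -> decomp src tgt S w a' b' ->
  (forall u, u \in Vsel S -> a' u = a u) /\ (forall f, f \in Dsel S -> b' f = b f).
Proof.
move=> Sindep dec dec'.
have [] := @dspan_free (fun u => a' u - a u) (fun f => b' f - b f) Sindep.
  under eq_bigr do rewrite scalerBl.
  under [X in _ + X]eq_bigr do rewrite scalerBl.
  by rewrite !sumrB addrACA -opprD -dec -dec' subrr.
by move=> Ha Hb; split=> [u /Ha|f /Hb] /eqP; rewrite subr_eq0 => /eqP.
Qed.

End DoubleEdgeLift.

End Cosmological.

Theorem mainTheorem2 (R : realType) (V E : finType) (src tgt : E -> V)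
  (h : lbl V E -> R) (S : {set lbl V E}) (w : V) :
  good src tgt h -> max_cell src tgt h S ->
  exists (a : V -> R) (b : E -> R),
    decomp src tgt S w a b /\
    forall (a' : V -> R) (b' : E -> R), decomp src tgt S w a' b' ->
      (forall u, u \in Vsel S -> a' u = a u) /\
      (forall f, f \in Dsel src tgt S -> b' f = b f).
Proof.
move=> hgood Smax; have [a [b dec]] := decomp_exists w hgood Smax.
have [Sindep _ _] := hgood; have [[c cS] _] := Smax.
exists a, b; split=> // a' b'.
exact: decomp_unique (Sindep S (ex_intro _ c cS)) dec.
Qed.
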